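(* Let $\alpha\in(1,\infty)$, let $p_{Y\mid X}$ be a channel between finite sets $\mathcal X,\mathcal Y$, and for a distribution $p_X$ on $\mathcal X$, a joint distribution $\tilde q_{X,Y}$ on $\mathcal X\times\mathcal Y$ with $X$-marginal $\tilde q_X$, and a reverse channel $r_{X\mid Y}$, define $$\tilde F_\alpha^{\mathrm{LP}}(p_X,\tilde q_{X,Y},r_{X\mid Y}):=\frac{\alpha}{1-\alpha}D(\tilde q_{X,Y}\|\tilde q_Xp_{Y\mid X})+\mathbb E^{\tilde q_{X,Y}}\!\left[\log\frac{r_{X\mid Y}(X\mid Y)}{\tilde q_X(X)}\right]+\frac{\alpha}{1-\alpha}D(\tilde q_X\|p_X).$$ Then: (1) for fixed $(p_X,\tilde q_{X,Y})$, it is maximized over $r_{X\mid Y}$ by $r^*_{X\mid Y}(x\mid y)=\tilde q_{X,Y}(x,y)/\sum_{x'}\tilde q_{X,Y}(x',y)$; (2) for fixed $(\tilde q_{X,Y},r_{X\mid Y})$, it is maximized over $p_X$ by $p_X^*(x)=\sum_y\tilde q_{X,Y}(x,y)$; (3) for fixed $(p_X,r_{X\mid Y})$, it is maximized over $\tilde q_{X,Y}$ by $\tilde q^*_{X,Y}(x,y)=\hat q_X(x)\hat q_{Y\mid X}(y\mid x)$, where $$\hat q_X(x)=\frac{p_X(x)^{\frac{\alpha}{2\alpha-1}}\big(\sum_yp_{Y\mid X}(y\mid x)r_{X\mid Y}(x\mid y)^{1-\frac1\alpha}\big)^{\frac{\alpha}{2\alpha-1}}}{\sum_{x'}p_X(x')^{\frac{\alpha}{2\alpha-1}}\big(\sum_yp_{Y\mid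 X}(y\mid x')r_{X\mid Y}(x'\mid y)^{1-\frac1\alpha}\big)^{\frac{\alpha}{2\alpha-1}}},\qquad \hat q_{Y\mid X}(y\mid x)=\frac{p_{Y\mid X}(y\mid x)r_{X\mid Y}(x\mid y)^{1-\frac1\alpha}}{\sum_{x'}p_{Y\mid X}(y\mid x')r_{X\mid Y}(x'\mid y)^{1-\frac1\alpha}}.$$
   Context: $\log$ is natural and $D$ is the Kullback–Leibler divergence. A reverse channel $r_{X\mid Y}$ is a family $\{r_{X\mid Y}(\cdot\mid y)\}_{y\in\mathcal Y}$ of distributions on $\mathcal X$. *)

From HB Require Import structures.
From mathcomp Require Import all_boot all_order all_algebra.
From mathcomp Require Import all_classical all_reals.
From mathcomp Require Import ereal exp.
Set Implicit Arguments. Unset Strict Implicit. Unset Printing Implicit Defensive.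
Import Order.TTheory GRing.Theory Num.Theory.
Local Open Scope ring_scope.

Section Defs.
Variables (R : realType) (X Y : finType).

Definition is_dist (T : finType) (f : T -> R) : Prop :=
  (forall t, 0 <= f t) /\ \sum_t f t = 1.

Definition is_channel (W : X -> Y -> R) : Prop := forall x, is_dist (W x).

(* reverse channel r_{X|Y}: r y x = r_{X|Y}(x|y) *)
Definition is_rev_channel (r : Y -> X -> R) : Prop := forall y, is_dist (r y).

Definition is_joint (q : X -> Y -> R) : Prop :=
  (forall x y, 0 <= q x y) /\ \sum_x \sum_y q x y = 1.

Definition margX (q : X -> Y -> R) (x : X) : R := \sum_y q x y.
Definition margY (q : X -> Y -> R) (y : Y) : R := \sum_x q x y.

(* a * log (a / b) with conventions 0 log(0/b) = 0, a log(a/0) = +oo (a > 0) *)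
Definition xlogxy (a b : R) : \bar R :=
  if a == 0 then 0%E else if b == 0 then +oo%E else (a * ln (a / b))%:E.

Definition KL (T : finType) (f g : T -> R) : \bar R :=
  (\sum_t xlogxy (f t) (g t))%E.

(* the summand q * log (r / m) of an expectation, with 0 * log(..) = 0 and
   q * log (0 / m) = -oo for q > 0 *)
Definition qlog (q r m : R) : \bar R :=
  if q == 0 then 0%E else if r == 0 then -oo%E else (q * ln (r / m))%:E.

Definition F_LP (alpha : R) (W : X -> Y -> R)
    (pX : X -> R) (q : X -> Y -> R) (r : Y -> X -> R) : \bar R :=
  let c := alpha / (1 - alpha) in
  let qXY := fun xy : X * Y => q xy.1 xy.2 in
  let qXpYX := fun xy : X * Y => (margX q xy.1 * W xy.1 xy.2)%R in
  (c%:E * KL qXY qXpYX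
   + (\sum_x \sum_y qlog (q x y) (r y x) (margX q x))
   + c%:E * KL (margX q) pX)%E.

Definition gfun (alpha : R) (W : X -> Y -> R) (r : Y -> X -> R) (x : X) : R :=
  \sum_y W x y * r y x `^ (1 - alpha^-1).

Definition qhatX_num (alpha : R) (W : X -> Y -> R) (pX : X -> R)
    (r : Y -> X -> R) (x : X) : R :=
  pX x `^ (alpha / (2 * alpha - 1)) * gfun alpha W r x `^ (alpha / (2 * alpha - 1)).

Definition qhatX_den (alpha : R) (W : X -> Y -> R) (pX : X -> R)
    (r : Y -> X -> R) : R :=
  \sum_x qhatX_num alpha W pX r x.

Definition qhatX (alpha : R) (W : X -> Y -> R) (pX : X -> R)
    (r : Y -> X -> R) (x : X) : R :=
  qhatX_num alpha W pX r x / qhatX_den alpha W pX r.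

Definition qhatYX (alpha : R) (W : X -> Y -> R) (r : Y -> X -> R)
    (x : X) (y : Y) : R :=
  W x y * r y x `^ (1 - alpha^-1) / gfun alpha W r x.

Definition qstar (alpha : R) (W : X -> Y -> R) (pX : X -> R)
    (r : Y -> X -> R) (x : X) (y : Y) : R :=
  qhatX alpha W pX r x * qhatYX alpha W r x y.

End Defs.

From HB Require Import structures.
From mathcomp Require Import all_boot all_order all_algebra.
From mathcomp Require Import all_classical all_reals.
From mathcomp Require Import ereal exp.
From mathcomp Require Import ring lra.
Import Order.TTheory GRing.Theory Num.Theory.
Set Implicit Arguments. Unset Strict Implicit. Unset Printing Implicit Defensive.
Local Open Scope ring_scope.

(* When the supports of q, W, r and pX are compatible, the three terms of
   F_LP are finite; otherwise one of the divergences is +oo or the expectation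
   is -oo, and F_LP = -oo because c = alpha / (1 - alpha) < 0.  In the finite
   case each part is Gibbs' inequality D >= 0:
   (1) F(r* ) - F(r) = D(q || r q_Y);
   (2) F(q_X) - F(p) = - c D(q_X || p);
   (3) F(q) = c D(q || q* ) - D(q_X || qhat_X) + (1 - c) log Z, where Z is the
       normalizer of qhat_X, with equality F(q* ) = (1 - c) log Z. *)

Section Gibbs.
Variable R : realType.

Lemma ln_le_subr1 (x : R) : 0 < x -> ln x <= x - 1.
Proof.
by move=> x_gt0; rewrite lerBrDl -[x in _ <= x]lnK ?posrE // expR_ge1Dx.
Qed.

Lemma subr_le_mul_ln_div (a b : R) : 0 <= a -> 0 <= b -> (a != 0 -> b != 0) ->
  a - b <= a * ln (a / b).
Proof.
move=> a_ge0 b_ge0 ab; have [->|a_neq0] := eqVneq a 0.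
  by rewrite mul0r sub0r oppr_le0.
have a_gt0 : 0 < a by rewrite lt0r a_neq0.
have b_gt0 : 0 < b by rewrite lt0r ab.
have := ln_le_subr1 (divr_gt0 b_gt0 a_gt0).
rewrite -invf_div lnV ?posrE ?divr_gt0 // -(ler_pM2l a_gt0) mulrBr mulrN.
by rewrite invf_div mulrCA divff // !mulr1 lerNl opprB.
Qed.

Lemma gibbs_inequality (T : finType) (f g : T -> R) :
  (forall t, 0 <= f t) -> (forall t, 0 <= g t) ->
  (forall t, f t != 0 -> g t != 0) -> \sum_t g t <= \sum_t f t ->
  0 <= \sum_t f t * ln (f t / g t).
Proof.
move=> f_ge0 g_ge0 fg; rewrite -subr_ge0 => gf; apply: le_trans gf _.
rewrite -sumrB; apply: ler_sum => t _.
exact: subr_le_mul_ln_div (f_ge0 t) (g_ge0 t) (fg t).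
Qed.

Lemma gibbs_inequality2 (X Y : finType) (f g : X -> Y -> R) :
  (forall x y, 0 <= f x y) -> (forall x y, 0 <= g x y) ->
  (forall x y, f x y != 0 -> g x y != 0) ->
  \sum_x \sum_y g x y <= \sum_x \sum_y f x y ->
  0 <= \sum_x \sum_y f x y * ln (f x y / g x y).
Proof.
move=> f_ge0 g_ge0 fg; rewrite !pair_bigA => fg_sum.
by apply: (gibbs_inequality _ _ _ fg_sum) => -[x y];
  [apply: f_ge0 | apply: g_ge0 | apply: fg].
Qed.

Lemma sum_mul_ln_divff (T : finType) (f : T -> R) :
  \sum_t f t * ln (f t / f t) = 0.
Proof.
rewrite big1 // => t _.
by have [->|ft] := eqVneq (f t) 0; rewrite ?mul0r ?divff ?ln1 ?mulr0.
Qed.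

End Gibbs.

Section FiniteDivergence.
Variable R : realType.
Implicit Types a b m : R.

Lemma xlogxy_fin a b : (a != 0 -> b != 0) -> xlogxy a b = (a * ln (a / b))%:E.
Proof.
by move=> ab; rewrite /xlogxy; have [->|/ab/negbTE->] := eqVneq a 0; rewrite ?mul0r.
Qed.

Lemma KL_fin (T : finType) (f g : T -> R) :
  (forall t, f t != 0 -> g t != 0) -> KL f g = (\sum_t f t * ln (f t / g t))%:E.
Proof.
by move=> fg; rewrite /KL -sumEFin; apply: eq_bigr => t _; exact/xlogxy_fin/fg.
Qed.

Lemma KL_pinfty (T : finType) (f g : T -> R) t :
  f t != 0 -> g t = 0 -> KL f g = +oo%E.
Proof.
move=> ft gt; apply/eqP; rewrite /KL esum_eqy => [|s _]; last first.
  by rewrite /xlogxy; case: ifP => //; case: ifP.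
by apply/existsP; exists t; rewrite /xlogxy (negbTE ft) gt eqxx.
Qed.

Lemma qlog_fin a b m : (a != 0 -> b != 0) -> qlog a b m = (a * ln (b / m))%:E.
Proof.
by move=> ab; rewrite /qlog; have [->|/ab/negbTE->] := eqVneq a 0; rewrite ?mul0r.
Qed.

Lemma qlog_Ny a b m : a != 0 -> b = 0 -> qlog a b m = -oo%E.
Proof. by rewrite /qlog => /negbTE-> ->; rewrite eqxx. Qed.

End FiniteDivergence.

Section Marginals.
Variables (R : realType) (X Y : finType) (q : X -> Y -> R).
Hypothesis q_ge0 : forall x y, 0 <= q x y.

Lemma margX_ge0 x : 0 <= margX q x.
Proof. by rewrite sumr_ge0. Qed.

Lemma margY_ge0 y : 0 <= margY q y.
Proof. by rewrite sumr_ge0. Qed.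

Let le_margX x y : q x y <= margX q x.
Proof. by rewrite /margX (bigD1 y) //= lerDl sumr_ge0. Qed.

Let le_margY x y : q x y <= margY q y.
Proof. by rewrite /margY (bigD1 x) //= lerDl sumr_ge0. Qed.

Lemma margX_gt0 x y : q x y != 0 -> 0 < margX q x.
Proof. by move=> qxy; rewrite (lt_le_trans _ (le_margX x y)) // lt0r qxy q_ge0. Qed.

Lemma margY_gt0 x y : q x y != 0 -> 0 < margY q y.
Proof. by move=> qxy; rewrite (lt_le_trans _ (le_margY x y)) // lt0r qxy q_ge0. Qed.

Lemma sum_margY : \sum_y margY q y = \sum_x \sum_y q x y.
Proof. exact: exchange_big. Qed.

End Marginals.

Lemma margX_dist (R : realType) (X Y : finType) (q : X -> Y -> R) :
  is_joint q -> is_dist (margX q).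
Proof. by case=> q_ge0 q1; split=> // x; apply: margX_ge0. Qed.

Section LPFunctional.
Variables (R : realType) (X Y : finType) (alpha : R) (W : X -> Y -> R).
Hypothesis alpha_gt1 : 1 < alpha.
Local Notation c := (alpha / (1 - alpha)).

Lemma LP_coef_lt0 : c < 0.
Proof. by rewrite pmulr_rlt0 ?invr_lt0 ?subr_lt0 // (lt_trans ltr01). Qed.

Definition LP_admissible (pX : X -> R) (q : X -> Y -> R) (r : Y -> X -> R) : Prop :=
  [/\ forall x y, q x y != 0 -> W x y != 0,
      forall x y, q x y != 0 -> r y x != 0 &
      forall x, margX q x != 0 -> pX x != 0].

Definition F_LPr (pX : X -> R) (q : X -> Y -> R) (r : Y -> X -> R) : R :=
  c * (\sum_x \sum_y q x y * ln (q x y / (margX q x * W x y)))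
  + \sum_x \sum_y q x y * ln (r y x / margX q x)
  + c * \sum_x margX q x * ln (margX q x / pX x).

Lemma F_LP_admissible pX (q : X -> Y -> R) r : (forall x y, 0 <= q x y) ->
  LP_admissible pX q r -> F_LP alpha W pX q r = (F_LPr pX q r)%:E.
Proof.
move=> q_ge0 [qW qr qp]; rewrite /F_LP /F_LPr !KL_fin //; last first.
  by move=> [x y] /= qxy; rewrite mulf_neq0 ?qW // gt_eqF // (margX_gt0 q_ge0 qxy).
rewrite !EFinD !EFinM; congr (_ + _ + _)%E; first by rewrite pair_bigA.
rewrite -sumEFin; apply: eq_bigr => x _; rewrite -sumEFin.
by apply: eq_bigr => y _; exact/qlog_fin/qr.
Qed.

Lemma F_LP_inadmissible pX (q : X -> Y -> R) r : (forall x y, 0 <= q x y) ->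
  ~ LP_admissible pX q r -> F_LP alpha W pX q r = -oo%E.
Proof.
move=> q_ge0 not_adm; have c_lt0 := LP_coef_lt0.
have [qW|/existsNP[x /existsNP[y /not_implyP[qxy /negP/negbNE/eqP Wxy]]]] :=
  pselect (forall x y, q x y != 0 -> W x y != 0); last first.
  by rewrite /F_LP (@KL_pinfty _ _ _ _ (x, y)) /= ?Wxy ?mulr0 // lt0_muley.
have [qr|/existsNP[x /existsNP[y /not_implyP[qxy /negP/negbNE/eqP rxy]]]] :=
  pselect (forall x y, q x y != 0 -> r y x != 0); last first.
  have sum_Ny : (\sum_x \sum_y qlog (q x y) (r y x) (margX q x) = -oo)%E.
    apply/eqP; rewrite esum_eqNy; apply/existsP; exists x; rewrite /=.
    by rewrite esum_eqNy; apply/existsP; exists y; rewrite /= (qlog_Ny _ qxy rxy).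
  by rewrite /F_LP sum_Ny addeNy addNye.
have [qp|/existsNP[x /not_implyP[qx /negP/negbNE/eqP px]]] :=
  pselect (forall x, margX q x != 0 -> pX x != 0); last first.
  by rewrite /F_LP (KL_pinfty qx px) lt0_muley // addeNy.
by case: not_adm; split.
Qed.

Lemma le_F_LP pX (q : X -> Y -> R) r z : (forall x y, 0 <= q x y) ->
  (LP_admissible pX q r -> (F_LP alpha W pX q r <= z)%E) ->
  (F_LP alpha W pX q r <= z)%E.
Proof.
move=> q_ge0 adm_le; have [/adm_le//|not_adm] := pselect (LP_admissible pX q r).
by rewrite F_LP_inadmissible ?leNye.
Qed.

Lemma F_LP_le_posterior pX (q : X -> Y -> R) (r0 r : Y -> X -> R) :
  is_joint q -> is_rev_channel r ->
  (forall x y, margY q y != 0 -> r0 y x = q x y / margY q y) ->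
  (F_LP alpha W pX q r <= F_LP alpha W pX q r0)%E.
Proof.
move=> [q_ge0 _] r_dist r0_post; apply: le_F_LP => // -[qW qr qp].
have r_ge0 x y : 0 <= r y x by case: (r_dist y).
have r0_pos x y : q x y != 0 -> 0 < r0 y x.
  move=> qxy; have qY_gt0 := margY_gt0 q_ge0 qxy.
  by rewrite r0_post ?gt_eqF // divr_gt0 // lt0r qxy q_ge0.
have adm0 : LP_admissible pX q r0 by split=> // x y /r0_pos/gt_eqF->.
rewrite !F_LP_admissible // lee_fin /F_LPr lerD2r lerD2l -subr_ge0.
have -> : \sum_x \sum_y q x y * ln (r0 y x / margX q x)
        - \sum_x \sum_y q x y * ln (r y x / margX q x)
        = \sum_x \sum_y q x y * ln (q x y / (r y x * margY q y)).
  rewrite -sumrB; apply: eq_bigr => x _; rewrite -sumrB; apply: eq_bigr => y _.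
  have [->|qxy] := eqVneq (q x y) 0; first by rewrite !mul0r subrr.
  have q_gt0 : 0 < q x y by rewrite lt0r qxy q_ge0.
  have r_gt0 : 0 < r y x by rewrite lt0r qr ?r_ge0.
  have qX_gt0 := margX_gt0 q_ge0 qxy; have qY_gt0 := margY_gt0 q_ge0 qxy.
  rewrite r0_post ?gt_eqF // -mulrBr.
  rewrite !ln_div ?lnM ?posrE ?mulr_gt0 ?divr_gt0 ?invr_gt0 //.
  by congr (_ * _); ring.
apply: (gibbs_inequality2 (g := fun x y => r y x * margY q y)) => // [x y|x y qxy|].
- by rewrite mulr_ge0 ?margY_ge0.
- by rewrite mulf_neq0 ?qr // gt_eqF // (margY_gt0 q_ge0 qxy).
rewrite exchange_big /= -(sum_margY q); apply: ler_sum => y _.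
by rewrite -mulr_suml; case: (r_dist y) => _ ->; rewrite mul1r.
Qed.

Lemma F_LP_le_margX pX (q : X -> Y -> R) r : is_joint q -> is_dist pX ->
  (F_LP alpha W pX q r <= F_LP alpha W (margX q) q r)%E.
Proof.
move=> q_joint [p_ge0 p1]; have [q_ge0 _] := q_joint.
apply: le_F_LP => // -[qW qr qp].
have adm : LP_admissible (margX q) q r by split.
rewrite !F_LP_admissible // lee_fin /F_LPr sum_mul_ln_divff mulr0 addr0.
rewrite gerDl nmulr_rle0 ?LP_coef_lt0 //.
have [qX_ge0 qX1] := margX_dist q_joint.
by apply: gibbs_inequality; rewrite ?qX1 ?p1.
Qed.

Section OptimalJoint.
Variables (pX : X -> R) (r : Y -> X -> R).
Hypotheses (W_channel : is_channel W) (pX_dist : is_dist pX)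
  (r_rev : is_rev_channel r) (Z_gt0 : 0 < qhatX_den alpha W pX r).
Local Notation beta := (alpha / (2 * alpha - 1)).
Local Notation gamma := (1 - alpha^-1).
Local Notation g := (gfun alpha W r).
Local Notation Z := (qhatX_den alpha W pX r).
Local Notation qhat := (qhatX alpha W pX r).
Local Notation qcond := (qhatYX alpha W r).
Local Notation qs := (qstar alpha W pX r).

Let W_ge0 x y : 0 <= W x y. Proof. by case: (W_channel x). Qed.
Let r_ge0 x y : 0 <= r y x. Proof. by case: (r_rev y). Qed.
Let pX_ge0 x : 0 <= pX x. Proof. by case: pX_dist. Qed.

Let alpha_gt0 : 0 < alpha. Proof. exact: lt_trans ltr01 alpha_gt1. Qed.

Let beta_neq0 : beta != 0.
Proof.
have den_gt0 : 0 < 2 * alpha - 1 by move: alpha_gt1; lra.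
by rewrite mulf_neq0 ?invr_eq0 ?gt_eqF.
Qed.

Let gamma_neq0 : gamma != 0.
Proof. by rewrite subr_eq0 eq_sym invr_eq1 gt_eqF. Qed.

Let gfun_term_ge0 x y : 0 <= W x y * r y x `^ gamma.
Proof. by rewrite mulr_ge0 ?powR_ge0. Qed.

Lemma gfun_ge0 x : 0 <= g x.
Proof. exact: sumr_ge0. Qed.

Lemma gfun_gt0 x y : W x y != 0 -> r y x != 0 -> 0 < g x.
Proof.
move=> Wxy rxy; apply: (@lt_le_trans _ _ (W x y * r y x `^ gamma)).
  by rewrite mulr_gt0 ?powR_gt0 // lt0r ?Wxy ?rxy ?W_ge0 ?r_ge0.
by rewrite /gfun (bigD1 y) //= lerDl sumr_ge0.
Qed.

Lemma qhatX_ge0 x : 0 <= qhat x.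
Proof. by rewrite divr_ge0 ?mulr_ge0 ?powR_ge0 // ltW. Qed.

Lemma qhatYX_ge0 x y : 0 <= qcond x y.
Proof. by rewrite divr_ge0 ?gfun_ge0. Qed.

Lemma sum_qhatX : \sum_x qhat x = 1.
Proof. by rewrite -mulr_suml divff ?gt_eqF. Qed.

Lemma margX_qstar x : margX qs x = qhat x.
Proof.
rewrite /margX -mulr_sumr; have [g0|g_neq0] := eqVneq (g x) 0.
  by rewrite /qhatX /qhatX_num g0 powR0 // mulr0 !mul0r.
by rewrite -mulr_suml divff // mulr1.
Qed.

Lemma qstar_joint : is_joint qs.
Proof.
split=> [x y|]; first by rewrite mulr_ge0 ?qhatX_ge0 ?qhatYX_ge0.
by rewrite -sum_qhatX; apply: eq_bigr => x _; apply: margX_qstar.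
Qed.

Lemma qstar_gt0 x y : W x y != 0 -> r y x != 0 -> pX x != 0 -> 0 < qs x y.
Proof.
move=> Wxy rxy pxy; have g_gt0 := gfun_gt0 Wxy rxy.
by rewrite mulr_gt0 ?divr_gt0 ?mulr_gt0 ?powR_gt0 // lt0r ?pxy ?Wxy ?rxy /=.
Qed.

Lemma qstar_admissible : LP_admissible pX qs r.
Proof.
split=> [x y|x y|x].
- by apply: contraNneq => W0; rewrite /qstar /qhatYX W0 !mul0r mulr0.
- by apply: contraNneq => r0; rewrite /qstar /qhatYX r0 powR0 // mulr0 !mul0r mulr0.
- rewrite margX_qstar; apply: contraNneq => p0.
  by rewrite /qhatX /qhatX_num p0 powR0 // !mul0r.
Qed.

Lemma ln_qhatX x : 0 < pX x -> 0 < g x ->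
  ln (qhat x) = beta * (ln (pX x) + ln (g x)) - ln Z.
Proof.
move=> p_gt0 g_gt0.
by rewrite ln_div ?lnM ?posrE ?mulr_gt0 ?powR_gt0 // !ln_powR mulrDr.
Qed.

Lemma ln_qhatYX x y : 0 < W x y -> 0 < r y x ->
  ln (qcond x y) = ln (W x y) + gamma * ln (r y x) - ln (g x).
Proof.
move=> W_gt0 r_gt0; have g_gt0 := gfun_gt0 (lt0r_neq0 W_gt0) (lt0r_neq0 r_gt0).
by rewrite ln_div ?lnM ?posrE ?mulr_gt0 ?powR_gt0 // ln_powR.
Qed.

Lemma F_LPr_decomposition (q : X -> Y -> R) :
  is_joint q -> LP_admissible pX q r ->
  F_LPr pX q r = c * (\sum_x \sum_y q x y * ln (q x y / qs x y))
                 - \sum_x margX q x * ln (margX q x / qhat x) + (1 - c) * ln Z.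
Proof.
move=> [q_ge0 q1] [qW qr qp].
have margE f : \sum_x margX q x * f x = \sum_x \sum_y q x y * f x.
  by apply: eq_bigr => x _; rewrite mulr_suml.
have constE k : k = \sum_x \sum_y q x y * k.
  by rewrite -margE -mulr_suml q1 mul1r.
rewrite /F_LPr !margE [in RHS](constE ((1 - c) * ln Z)) !mulr_sumr -!sumrB -!big_split.
apply: eq_bigr => x _; rewrite !mulr_sumr -!sumrB -!big_split; apply: eq_bigr => y _ /=.
have [->|qxy] := eqVneq (q x y) 0; first by rewrite !mul0r; ring.
have q_gt0 : 0 < q x y by rewrite lt0r qxy q_ge0.
have qX_gt0 := margX_gt0 q_ge0 qxy.
have W_gt0 : 0 < W x y by rewrite lt0r qW ?W_ge0.
have r_gt0 : 0 < r y x by rewrite lt0r qr ?r_ge0.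
have p_gt0 : 0 < pX x by rewrite lt0r qp ?pX_ge0 // lt0r_neq0.
have g_gt0 := gfun_gt0 (qW _ _ qxy) (qr _ _ qxy).
have qs_gt0 := qstar_gt0 (qW _ _ qxy) (qr _ _ qxy) (lt0r_neq0 p_gt0).
have qhat_gt0 : 0 < qhat x.
  by rewrite -margX_qstar (margX_gt0 _ (lt0r_neq0 qs_gt0)) //; case: qstar_joint.
have qcond_gt0 : 0 < qcond x y by rewrite divr_gt0 ?mulr_gt0 ?powR_gt0.
have ln_qs : ln (qs x y) =
    beta * (ln (pX x) + ln (g x)) - ln Z + (ln (W x y) + gamma * ln (r y x) - ln (g x)).
  by rewrite lnM ?posrE // ln_qhatX // ln_qhatYX.
rewrite [ln (q x y / qs x y)]ln_div ?posrE // ln_qs.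
rewrite [ln (margX q x / qhat x)]ln_div ?posrE // ln_qhatX //.
rewrite !ln_div ?lnM ?posrE ?mulr_gt0 //.
(* The coefficients match because c * gamma = -1 and beta * (1 - c) = -c. *)
have h1 : 1 - alpha != 0 by rewrite lt_eqF //; move: alpha_gt1; lra.
have h2 : 2 * alpha - 1 != 0 by rewrite gt_eqF //; move: alpha_gt1; lra.
by field; rewrite h1 h2 gt_eqF.
Qed.

Lemma F_LP_le_qstar (q : X -> Y -> R) : is_joint q ->
  (F_LP alpha W pX q r <= F_LP alpha W pX qs r)%E.
Proof.
move=> q_joint; have [q_ge0 q1] := q_joint; have [qs_ge0 qs1] := qstar_joint.
apply: le_F_LP => // adm; have [qW qr qp] := adm.
have qs_adm := qstar_admissible.
rewrite !F_LP_admissible // lee_fin !F_LPr_decomposition // (funext margX_qstar).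
rewrite [in X in _ <= X]big1 => [|x _]; last exact: sum_mul_ln_divff.
rewrite sum_mul_ln_divff mulr0 subr0 add0r gerDr subr_le0.
have qs_supp x y : q x y != 0 -> qs x y != 0.
  move=> qxy; have qX_gt0 := margX_gt0 q_ge0 qxy.
  by rewrite lt0r_neq0 // qstar_gt0 ?qW ?qr // qp // lt0r_neq0.
have [qX_ge0 qX1] := margX_dist q_joint.
have qhat_supp x : margX q x != 0 -> qhat x != 0.
  move=> /eqP /(psumr_neq0P (fun y _ => q_ge0 x y)) [y /andP[_ /lt0r_neq0 qxy]].
  by rewrite -margX_qstar lt0r_neq0 // (margX_gt0 qs_ge0 (qs_supp x y qxy)).
apply: (@le_trans _ _ 0).
  rewrite nmulr_rle0 ?LP_coef_lt0 //.
  by apply: gibbs_inequality2; rewrite // q1 qs1.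
apply: gibbs_inequality => //; rewrite ?qX1 ?sum_qhatX // => x; exact: qhatX_ge0.
Qed.

End OptimalJoint.
End LPFunctional.

Theorem proposition6 (R : realType) (X Y : finType) (alpha : R)
    (halpha : 1 < alpha) (W : X -> Y -> R) (hW : is_channel W) :
  (* (1) optimal reverse channel *)
  (forall (pX : X -> R) (q : X -> Y -> R),
     is_dist pX -> is_joint q ->
     forall r0 : Y -> X -> R, is_rev_channel r0 ->
     (forall x y, margY q y != 0 -> r0 y x = q x y / margY q y) ->
     forall r : Y -> X -> R, is_rev_channel r ->
     (F_LP alpha W pX q r <= F_LP alpha W pX q r0)%E)
  /\
  (* (2) optimal input distribution *)
  (forall (q : X -> Y -> R) (r : Y -> X -> R),
     is_joint q -> is_rev_channel r ->
     is_dist (margX q) /\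
     forall pX : X -> R, is_dist pX ->
     (F_LP alpha W pX q r <= F_LP alpha W (margX q) q r)%E)
  /\
  (* (3) optimal joint distribution *)
  (forall (pX : X -> R) (r : Y -> X -> R),
     is_dist pX -> is_rev_channel r ->
     0 < qhatX_den alpha W pX r ->
     is_joint (qstar alpha W pX r) /\
     forall q : X -> Y -> R, is_joint q ->
     (F_LP alpha W pX q r <= F_LP alpha W pX (qstar alpha W pX r) r)%E).
Proof.
split; [|split].
- move=> pX q _ q_joint r0 _ r0_post r r_rev.
  exact: F_LP_le_posterior.
- move=> q r q_joint _; split; first exact: margX_dist.
  by move=> pX pX_dist; apply: F_LP_le_margX.
- move=> pX r pX_dist r_rev Z_gt0; split; first exact: qstar_joint.
  by move=> q q_joint; apply: F_LP_le_qstar.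
Qed.
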